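(* Let $n\ge3$ be odd and let $0<q<q_o$, where $q_o=\frac{\sqrt{414-66\sqrt{33}}}{16}\approx0.3690$. Let $\omega=(nq,\ldots,nq,-nq,\ldots,-nq,0)\in\mathbb{R}^n$ (with $(n-1)/2$ entries equal to $nq$, then $(n-1)/2$ entries equal to $-nq$, then a final entry $0$) and $k=(n,\ldots,n)$. Then the number of equilibria $\theta\in(-\pi,\pi]^n$ satisfying $$\omega_\nu=\frac1n\sum_{\mu=1}^nk_\nu k_\mu\sin(\theta_\nu-\theta_\mu)\ (\nu=1,\ldots,n),\qquad \sum_{\mu=1}^nk_\mu e^{i\theta_\mu}\in\mathbb{R}_{\ge0},$$ is $2^n-\binom{n-1}{(n-1)/2}$. *)

From Stdlib Require Import Reals List.
Import ListNotations.
Open Scope R_scope.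

Definition q_o : R := sqrt (414 - 66 * sqrt 33) / 16.

(* Natural frequencies, indices nu = 0..n-1 (0-based):
   first (n-1)/2 entries are n q, next (n-1)/2 entries are -n q, last is 0. *)
Definition omega (n : nat) (q : R) (nu : nat) : R :=
  if Nat.ltb nu ((n - 1) / 2) then INR n * q
  else if Nat.ltb nu (n - 1) then - (INR n * q)
  else 0.

Definition kw (n : nat) (nu : nat) : R := INR n.

Definition th (theta : list R) (nu : nat) : R := nth nu theta 0.

(* Sum over mu = 1..n, i.e. 0-based mu = 0..n-1 (sum_f_R0 f m = f 0 + ... + f m). *)
Definition sumn (n : nat) (f : nat -> R) : R := sum_f_R0 f (n - 1).

(* theta in (-pi, pi]^n is an equilibrium with the normalization
   sum_mu k_mu e^{i theta_mu} in R_{>=0}, i.e. imaginary part 0, real part >= 0. *)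
Definition is_equilibrium (n : nat) (q : R) (theta : list R) : Prop :=
  length theta = n /\
  (forall nu, (nu < n)%nat -> - PI < th theta nu <= PI) /\
  (forall nu, (nu < n)%nat ->
     omega n q nu =
     / INR n * sumn n (fun mu => kw n nu * kw n mu * sin (th theta nu - th theta mu))) /\
  sumn n (fun mu => kw n mu * sin (th theta mu)) = 0 /\
  0 <= sumn n (fun mu => kw n mu * cos (th theta mu)).

(* With all weights equal to n the equilibrium equations read
   omega_nu = n sin(theta_nu) C, where C = sum cos(theta_mu) >= 0 and sum sin(theta_mu) = 0.
   Since q > 0 this forces C > 0, and with a = asin (q / C) every oscillator sits at a or
   PI - a (omega = n q), at -a or a - PI (omega = -n q), or at 0 or PI (omega = 0).
   Recording the signs of the cosines by B in {+-1}^(2m) and e in {+-1}, the only remaining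
   condition is the self-consistency equation q = sin a (k cos a + e) on (0, PI/2), where
   k = sum B is even.  For e = 1 it has exactly one solution, for e = -1 none when k <= 0
   and exactly two when k >= 2, because q < q_o = max sin a (2 cos a - 1).  Hence the
   number of equilibria is 2^(2m) + 2 #{B | sum B > 0}, and by the symmetry B -> -B
   this is 2^(2m) + (2^(2m) - C(2m, m)). *)

From Stdlib Require Import Reals List Lia Lra.
Import ListNotations.
Open Scope R_scope.

(** * Finite cardinalities *)

Definition has_card {A} (P : A -> Prop) (N : nat) : Prop :=
  exists l, NoDup l /\ (forall x, In x l <-> P x) /\ length l = N.

Lemma has_card_ext {A} (P Q : A -> Prop) N :
  (forall x, P x <-> Q x) -> has_card P N -> has_card Q N.
Proof.
  intros HPQ [l [Hl [Hin Hlen]]]. exists l. split; [exact Hl | split; [| exact Hlen]].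
  intros x. rewrite Hin. apply HPQ.
Qed.

Lemma has_card_0 {A} (P : A -> Prop) : (forall x, ~ P x) -> has_card P 0.
Proof.
  intros HP. exists []. split; [constructor | split; [| reflexivity]].
  intros x. split; [intros [] | intros Hx; destruct (HP x Hx)].
Qed.

Lemma has_card_1 {A} (P : A -> Prop) r :
  P r -> (forall x, P x -> x = r) -> has_card P 1.
Proof.
  intros Hr Huniq. exists [r]. split; [repeat constructor; intros [] | split; [| reflexivity]].
  intros x. split; [intros [<- | []]; exact Hr | intros Hx; left; symmetry; auto].
Qed.

Lemma has_card_2 {A} (P : A -> Prop) r1 r2 :
  r1 <> r2 -> P r1 -> P r2 -> (forall x, P x -> x = r1 \/ x = r2) -> has_card P 2.
Proof.
  intros Hne Hr1 Hr2 Hall. exists [r1; r2].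
  split; [repeat constructor; simpl; intuition | split; [| reflexivity]].
  intros x. split; [intros [<- | [<- | []]]; assumption |].
  intros Hx. destruct (Hall x Hx) as [-> | ->]; simpl; auto.
Qed.

Lemma has_card_image {A B} (f : A -> B) (P : A -> Prop) N :
  (forall x y, P x -> P y -> f x = f y -> x = y) -> has_card P N ->
  has_card (fun y => exists x, P x /\ y = f x) N.
Proof.
  intros Hinj [l [Hl [Hin Hlen]]]. exists (map f l). split; [| split].
  - apply NoDup_map_NoDup_ForallPairs; [| exact Hl].
    intros x y Hx Hy. apply Hinj; apply Hin; assumption.
  - intros y. rewrite in_map_iff. split.
    + intros [x [<- Hx]]. exists x. split; [apply Hin, Hx | reflexivity].
    + intros [x [Hx ->]]. exists x. split; [reflexivity | apply Hin, Hx].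
  - rewrite length_map. exact Hlen.
Qed.

Lemma has_card_union {A} (P Q : A -> Prop) M N :
  (forall x, P x -> Q x -> False) -> has_card P M -> has_card Q N ->
  has_card (fun x => P x \/ Q x) (M + N).
Proof.
  intros Hdisj [l1 [Hl1 [Hin1 Hlen1]]] [l2 [Hl2 [Hin2 Hlen2]]].
  exists (l1 ++ l2). split; [| split].
  - apply NoDup_app; [exact Hl1 | exact Hl2 |].
    intros x Hx1 Hx2. apply (Hdisj x); [apply Hin1 | apply Hin2]; assumption.
  - intros x. rewrite in_app_iff, Hin1, Hin2. reflexivity.
  - rewrite length_app, Hlen1, Hlen2. reflexivity.
Qed.

Lemma has_card_bigunion {I A} (X : list I) (P : I -> A -> Prop) (N : I -> nat) :
  NoDup X -> (forall i, In i X -> has_card (P i) (N i)) ->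
  (forall i j x, In i X -> In j X -> P i x -> P j x -> i = j) ->
  has_card (fun x => exists i, In i X /\ P i x) (list_sum (map N X)).
Proof.
  induction X as [|i X IH]; intros HX Hcard Hdisj; simpl.
  - apply has_card_0. intros x [i [[] _]].
  - apply NoDup_cons_iff in HX as [HiX HX].
    apply (has_card_ext (fun x => P i x \/ exists j, In j X /\ P j x)).
    { intros x. split.
      - intros [Hx | [j [Hj Hx]]]; eauto using in_eq, in_cons.
      - intros [j [[<- | Hj] Hx]]; eauto. }
    apply has_card_union.
    + intros x Hx [j [Hj Hx']]. apply HiX.
      replace i with j; [exact Hj |]. apply (Hdisj j i x); simpl; auto.
    + apply Hcard. left. reflexivity.
    + apply IH; auto.
      * intros j Hj. apply Hcard. right. exact Hj.
      * intros j j' x Hj Hj'. apply Hdisj; right; assumption.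
Qed.

(** * Counting sign patterns *)

Fixpoint bool_lists (L : nat) : list (list bool) :=
  match L with
  | O => [[]]
  | S L => map (cons true) (bool_lists L) ++ map (cons false) (bool_lists L)
  end.

Definition count_true (B : list bool) : nat := length (filter (fun t => t) B).

Lemma In_bool_lists L B : In B (bool_lists L) <-> length B = L.
Proof.
  revert B; induction L as [|L IH]; intros B; simpl.
  - split; [intros [<- | []]; reflexivity |].
    destruct B; simpl; [auto | discriminate].
  - rewrite in_app_iff, !in_map_iff. split.
    + intros [[B' [<- HB]] | [B' [<- HB]]]; simpl; f_equal; apply IH, HB.
    + destruct B as [|t B]; simpl; [discriminate |]. intros [= HB].
      destruct t; [left | right]; exists B; split; auto; apply IH, HB.
Qed.

Lemma NoDup_bool_lists L : NoDup (bool_lists L).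
Proof.
  induction L as [|L IH]; simpl.
  - repeat constructor. intros [].
  - apply NoDup_app.
    + apply NoDup_map_NoDup_ForallPairs; auto. intros x y _ _ [= ->]. reflexivity.
    + apply NoDup_map_NoDup_ForallPairs; auto. intros x y _ _ [= ->]. reflexivity.
    + intros B H1 H2. apply in_map_iff in H1 as [x [<- _]].
      apply in_map_iff in H2 as [y [[=] _]].
Qed.

Lemma length_bool_lists L : length (bool_lists L) = (2 ^ L)%nat.
Proof. induction L as [|L IH]; simpl; auto. rewrite length_app, !length_map, IH. lia. Qed.

Lemma count_true_le B : (count_true B <= length B)%nat.
Proof. apply filter_length_le. Qed.

Lemma count_true_map_negb B : (count_true (map negb B) + count_true B)%nat = length B.
Proof. unfold count_true. induction B as [|[] B IH]; simpl; lia. Qed.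

Lemma length_filter_map {A B} (p : B -> bool) (f : A -> B) (X : list A) :
  length (filter p (map f X)) = length (filter (fun x => p (f x)) X).
Proof. induction X as [|x X IH]; simpl; [| destruct (p (f x)); simpl]; auto. Qed.

Lemma count_bool_lists_map_negb L (p : list bool -> bool) :
  length (filter p (bool_lists L)) = length (filter (fun B => p (map negb B)) (bool_lists L)).
Proof.
  revert p; induction L as [|L IH]; intros p; simpl; auto.
  rewrite !filter_app, !length_app, !length_filter_map.
  rewrite (IH (fun B => p (true :: B))), (IH (fun B => p (false :: B))). simpl. lia.
Qed.

Lemma binomial_n_0 n : Binomial.C n 0 = 1.
Proof. unfold Binomial.C. rewrite Nat.sub_0_r. simpl. field. apply INR_fact_neq_0. Qed.

Lemma binomial_n_n n : Binomial.C n n = 1.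
Proof. unfold Binomial.C. rewrite Nat.sub_diag. simpl. field. apply INR_fact_neq_0. Qed.

Lemma count_bool_lists_above L j : (L < j)%nat ->
  length (filter (fun B => (count_true B =? j)%nat) (bool_lists L)) = O.
Proof.
  intros HLj. rewrite (filter_ext_in _ (fun _ => false)), filter_false; [reflexivity |].
  intros B HB. apply In_bool_lists in HB. apply Nat.eqb_neq.
  pose proof (count_true_le B). lia.
Qed.

Lemma count_bool_lists_binomial L j : (j <= L)%nat ->
  INR (length (filter (fun B => (count_true B =? j)%nat) (bool_lists L))) = Binomial.C L j.
Proof.
  revert j; induction L as [|L IH]; intros j Hj; simpl.
  - replace j with O by lia. rewrite binomial_n_0. simpl. ring.
  - rewrite filter_app, length_app, !length_filter_map, plus_INR. unfold count_true. simpl.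
    fold count_true. destruct j as [|j].
    + rewrite filter_false, IH, !binomial_n_0 by lia. simpl. ring.
    + rewrite IH by lia. destruct (Nat.eq_dec j L) as [-> | HjL].
      * rewrite count_bool_lists_above, !binomial_n_n by lia. simpl. ring.
      * rewrite IH by lia. apply Binomial.pascal. lia.
Qed.

Lemma list_sum_one_plus_two {A} (p : A -> bool) (X : list A) :
  list_sum (map (fun x => 1 + if p x then 2 else 0)%nat X) =
  (length X + 2 * length (filter p X))%nat.
Proof.
  induction X as [|x X IH]; [reflexivity |].
  change (list_sum (map ?f (x :: X))) with (f x + list_sum (map f X))%nat.
  rewrite IH. simpl. destruct (p x); simpl; lia.
Qed.

Lemma length_filter_trichotomy {A} (f : A -> nat) m (X : list A) :
  (length (filter (fun x => m <? f x) X) + length (filter (fun x => f x <? m) X)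
   + length (filter (fun x => f x =? m) X))%nat = length X.
Proof.
  induction X as [|x X IH]; simpl; auto.
  destruct (Nat.ltb_spec m (f x)), (Nat.ltb_spec (f x) m), (Nat.eqb_spec (f x) m); simpl; lia.
Qed.

Lemma count_true_gt_lt_sym m :
  length (filter (fun B => m <? count_true B) (bool_lists (2*m))) =
  length (filter (fun B => count_true B <? m) (bool_lists (2*m))).
Proof.
  rewrite count_bool_lists_map_negb. f_equal. apply filter_ext_in. intros B HB.
  apply In_bool_lists in HB. pose proof (count_true_map_negb B).
  destruct (Nat.ltb_spec m (count_true (map negb B))), (Nat.ltb_spec (count_true B) m); auto; lia.
Qed.

Lemma sum_majority_weights m :
  INR (list_sum (map (fun B => 1 + if m <? count_true B then 2 else 0)%nat (bool_lists (2*m)))) =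
  2 ^ (2*m+1) - Binomial.C (2*m) m.
Proof.
  rewrite list_sum_one_plus_two, <- count_bool_lists_binomial by lia.
  pose proof (length_filter_trichotomy count_true m (bool_lists (2*m))) as Htri.
  rewrite count_true_gt_lt_sym, length_bool_lists in *.
  apply (f_equal INR) in Htri. rewrite !plus_INR, pow_INR in Htri.
  rewrite plus_INR, mult_INR, pow_INR, pow_add, pow_1.
  replace (INR 2) with 2 in * by (simpl; ring). lra.
Qed.

(** * The self-consistency equation *)

Definition increasing_on (f : R -> R) (u v : R) : Prop :=
  forall x y, u <= x -> x < y -> y <= v -> f x < f y.

Definition decreasing_on (f : R -> R) (u v : R) : Prop :=
  forall x y, u <= x -> x < y -> y <= v -> f y < f x.

Lemma increasing_on_derive f f' u v :
  (forall x, u <= x <= v -> derivable_pt_lim f x (f' x)) ->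
  (forall x, u < x < v -> 0 < f' x) -> increasing_on f u v.
Proof.
  intros Hd Hpos x y Hux Hxy Hyv.
  destruct (MVT_cor2 f f' x y Hxy) as [c [Hc Hcxy]].
  - intros c Hc. apply Hd. lra.
  - assert (0 < f' c) by (apply Hpos; lra). nra.
Qed.

Lemma decreasing_on_derive f f' u v :
  (forall x, u <= x <= v -> derivable_pt_lim f x (f' x)) ->
  (forall x, u < x < v -> f' x < 0) -> decreasing_on f u v.
Proof.
  intros Hd Hneg x y Hux Hxy Hyv.
  enough (- f x < - f y) by lra.
  apply (increasing_on_derive (fun x => - f x) (fun x => - f' x) u v); auto.
  - intros z Hz. apply (derivable_pt_lim_opp f). auto.
  - intros z Hz. specialize (Hneg z Hz). lra.
Qed.

Lemma increasing_on_unique_root f u v q :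
  continuity f -> u < v -> increasing_on f u v -> f u < q < f v ->
  exists r, u < r < v /\ f r = q /\ forall x, u <= x <= v -> f x = q -> x = r.
Proof.
  intros Hf Huv Hinc Hq.
  destruct (IVT_cor (fun x => f x - q) u v) as [r [Hr Hfr]].
  - apply continuity_minus; [exact Hf | apply continuity_const; intros ? ?; reflexivity].
  - lra.
  - nra.
  - assert (Hr' : u < r < v).
    { split; apply Rnot_le_lt; intros Hle.
      - replace r with u in Hfr by lra. lra.
      - replace r with v in Hfr by lra. lra. }
    exists r. split; [exact Hr' | split; [lra |]].
    intros x Hx Hfx. destruct (Rtotal_order x r) as [Hlt | [Heq | Hgt]]; auto.
    + specialize (Hinc x r ltac:(lra) Hlt ltac:(lra)). lra.
    + specialize (Hinc r x ltac:(lra) Hgt ltac:(lra)). lra.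
Qed.

Lemma decreasing_on_unique_root f u v q :
  continuity f -> u < v -> decreasing_on f u v -> f v < q < f u ->
  exists r, u < r < v /\ f r = q /\ forall x, u <= x <= v -> f x = q -> x = r.
Proof.
  intros Hf Huv Hdec Hq.
  destruct (increasing_on_unique_root (fun x => - f x) u v (- q)) as [r [Hr [Hfr Huniq]]].
  - apply continuity_opp, Hf.
  - exact Huv.
  - intros x y Hux Hxy Hyv. specialize (Hdec x y Hux Hxy Hyv). lra.
  - lra.
  - exists r. split; [exact Hr | split; [lra |]].
    intros x Hx Hfx. apply Huniq; [exact Hx | lra].
Qed.

Definition consistency (k e a : R) : R := sin a * (k * cos a + e).

Lemma consistency_derive k e a :
  derivable_pt_lim (consistency k e) a (k * (2 * cos a ^ 2 - 1) + e * cos a).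
Proof.
  replace (k * (2 * cos a ^ 2 - 1) + e * cos a)
    with (cos a * (k * cos a + e) + sin a * (k * - sin a + 0)).
  - apply (derivable_pt_lim_mult sin (fun x => k * cos x + e)).
    + apply derivable_pt_lim_sin.
    + apply (derivable_pt_lim_plus (fun x => k * cos x) (fun _ => e)).
      * apply (derivable_pt_lim_scal cos). apply derivable_pt_lim_cos.
      * apply derivable_pt_lim_const.
  - pose proof (sin2_cos2 a) as H. unfold Rsqr in H.
    replace (sin a * (k * - sin a + 0)) with (- k * (sin a * sin a)) by ring.
    replace (sin a * sin a) with (1 - cos a * cos a) by lra. ring.
Qed.

Lemma continuity_consistency k e : continuity (consistency k e).
Proof. unfold consistency. reg. Qed.

Lemma consistency_0 k e : consistency k e 0 = 0.
Proof. unfold consistency. rewrite sin_0. ring. Qed.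

Lemma consistency_PI2 k e : consistency k e (PI/2) = e.
Proof. unfold consistency. rewrite sin_PI2, cos_PI2. ring. Qed.

Lemma consistency_opp k e a : consistency k e a = - consistency (- k) (- e) a.
Proof. unfold consistency. ring. Qed.

Lemma consistency_unimodal k e : 0 < k -> 0 < k + e ->
  exists c, 0 < c < PI/2 /\ increasing_on (consistency k e) 0 c /\
            decreasing_on (consistency k e) c (PI/2).
Proof.
  intros Hk Hke. pose proof PI_RGT_0 as HPI.
  set (D := fun a => k * (2 * cos a ^ 2 - 1) + e * cos a).
  destruct (IVT_cor D 0 (PI/2)) as [c [Hc HDc]];
    [unfold D; reg | lra | unfold D; rewrite cos_0, cos_PI2; nra |].
  assert (Hc' : 0 < c < PI/2).
  { split; apply Rnot_le_lt; intros Hle.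
    - replace c with 0 in HDc by lra. unfold D in HDc. rewrite cos_0 in HDc. lra.
    - replace c with (PI/2) in HDc by lra. unfold D in HDc. rewrite cos_PI2 in HDc. lra. }
  (* Writing D a = D a - D c factors D, so D has the sign of cos a - cos c. *)
  assert (Hcosc : 0 < cos c) by (apply cos_gt_0; lra).
  assert (Hfactor : 0 < 2 * k * cos c + e).
  { unfold D in HDc. assert (cos c * (2 * k * cos c + e) = k) by nra. nra. }
  assert (HD : forall a, 0 <= a <= PI/2 ->
            D a = (cos a - cos c) * (2 * k * (cos a + cos c) + e) /\
            0 < 2 * k * (cos a + cos c) + e).
  { intros a Ha. assert (0 <= cos a) by (apply cos_ge_0; lra).
    split; [unfold D in *; nra | nra]. }
  exists c. split; [exact Hc' | split].
  - apply (increasing_on_derive _ D); [intros; apply consistency_derive |].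
    intros a Ha. destruct (HD a ltac:(lra)) as [-> Hpos].
    assert (cos c < cos a) by (apply cos_decreasing_1; lra). nra.
  - apply (decreasing_on_derive _ D); [intros; apply consistency_derive |].
    intros a Ha. destruct (HD a ltac:(lra)) as [-> Hpos].
    assert (cos a < cos c) by (apply cos_decreasing_1; lra). nra.
Qed.


Lemma asin_pos x : 0 < x <= 1 -> 0 < asin x.
Proof.
  intros Hx. pose proof (asin_bound x) as Hb. pose proof (sin_asin x ltac:(lra)) as Hs.
  apply Rnot_le_lt. intros Hle.
  assert (0 <= sin (- asin x)) by (apply sin_ge_0; lra).
  rewrite sin_neg in *. lra.
Qed.

Definition roots (k e q : R) (a : R) : Prop := 0 < a < PI/2 /\ consistency k e a = q.

Lemma card_roots_plus_pos k q : 0 < q < 1 -> 0 < k -> has_card (roots k 1 q) 1.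
Proof.
  intros Hq Hk.
  destruct (consistency_unimodal k 1 Hk ltac:(lra)) as [c [Hc [Hinc Hdec]]].
  assert (Hpeak : 1 < consistency k 1 c).
  { rewrite <- (consistency_PI2 k 1) at 1. apply Hdec; lra. }
  destruct (increasing_on_unique_root (consistency k 1) 0 c q) as [r [Hr [Hfr Huniq]]];
    [apply continuity_consistency | lra | exact Hinc | rewrite consistency_0; lra |].
  apply (has_card_1 _ r); [split; [lra | exact Hfr] |].
  intros a [Ha Hfa]. destruct (Rle_lt_dec a c) as [Hac | Hca]; [apply Huniq; lra |].
  assert (consistency k 1 (PI/2) < consistency k 1 a) by (apply Hdec; lra).
  rewrite consistency_PI2 in *. lra.
Qed.

Lemma card_roots_plus_0 q : 0 < q < 1 -> has_card (roots 0 1 q) 1.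
Proof.
  intros Hq.
  assert (Hsin : forall a, consistency 0 1 a = sin a) by (intros; unfold consistency; ring).
  apply (has_card_1 _ (asin q)).
  - pose proof (asin_bound_lt q ltac:(lra)). pose proof (asin_pos q ltac:(lra)).
    split; [lra |]. rewrite Hsin. apply sin_asin. lra.
  - intros a [Ha Hfa]. rewrite Hsin in Hfa. rewrite <- Hfa. symmetry. apply asin_sin. lra.
Qed.

Lemma card_roots_plus_neg k q : 0 < q < 1 -> k < -1 -> has_card (roots k 1 q) 1.
Proof.
  intros Hq Hk. set (g := consistency (- k) (- 1)).
  assert (Hg : forall a, consistency k 1 a = q <-> g a = - q).
  { intros a. unfold g. rewrite consistency_opp. replace (- (1)) with (-1) by ring.
    split; intros; lra. }
  destruct (consistency_unimodal (- k) (- 1) ltac:(lra) ltac:(lra)) as [c [Hc [Hinc Hdec]]].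
  fold g in Hinc, Hdec.
  assert (Hpos : forall a, 0 < a <= c -> 0 < g a).
  { intros a Ha. rewrite <- (consistency_0 (- k) (- 1)). apply Hinc; lra. }
  destruct (decreasing_on_unique_root g c (PI/2) (- q)) as [r [Hr [Hgr Huniq]]];
    [apply continuity_consistency | lra | exact Hdec
    | specialize (Hpos c ltac:(lra)); unfold g in *; rewrite consistency_PI2; lra |].
  apply (has_card_1 _ r); [split; [lra | apply Hg, Hgr] |].
  intros a [Ha Hfa]. apply Hg in Hfa.
  destruct (Rle_lt_dec a c) as [Hac | Hca]; [specialize (Hpos a ltac:(lra)); lra |].
  apply Huniq; lra.
Qed.

Lemma card_roots_minus_nonpos k q : 0 < q -> k <= 0 -> has_card (roots k (-1) q) 0.
Proof.
  intros Hq Hk. apply has_card_0. intros a [Ha Hfa]. unfold consistency in Hfa.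
  assert (0 < sin a) by (apply sin_gt_0; lra).
  assert (0 <= cos a) by (apply cos_ge_0; lra).
  assert (k * cos a <= 0) by nra. nra.
Qed.

Lemma q_o_lt_1 : q_o < 1.
Proof.
  unfold q_o. assert (Hr : sqrt 33 * sqrt 33 = 33) by (apply sqrt_sqrt; lra).
  assert (5 < sqrt 33 < 6) by (pose proof (sqrt_pos 33); nra).
  assert (sqrt (414 - 66 * sqrt 33) < sqrt (16 * 16)) by (apply sqrt_lt_1_alt; lra).
  rewrite sqrt_square in * by lra. lra.
Qed.

(* q_o is the maximum of [consistency 2 (-1)], attained where cos a = (1 + sqrt 33) / 8. *)
Lemma q_o_le_consistency k : 2 <= k ->
  exists a, 0 <= a <= PI/2 /\ q_o <= consistency k (-1) a.
Proof.
  intros Hk. pose proof PI_RGT_0.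
  set (r := sqrt 33). assert (Hr : r * r = 33) by (apply sqrt_sqrt; lra).
  assert (Hr5 : 5 < r < 6) by (pose proof (sqrt_pos 33) as H0; fold r in H0; nra).
  set (x := (1 + r) / 8). assert (Hx : 0 < x < 1) by (unfold x; nra).
  exists (acos x). pose proof (acos_bound x). assert (Hcos := cos_acos x ltac:(lra)).
  split.
  - split; [lra |]. apply Rnot_lt_le. intros Hlt.
    assert (cos (acos x) <= 0) by (apply cos_le_0; lra). lra.
  - unfold consistency, q_o. rewrite Hcos, sin_acos by lra. fold r.
    set (t := sqrt (1 - x²)). assert (Ht : t * t = 1 - x * x).
    { unfold t, Rsqr. apply sqrt_sqrt. nra. }
    set (s := sqrt (414 - 66 * r)). assert (Hs : s * s = 414 - 66 * r) by (apply sqrt_sqrt; nra).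
    assert (0 <= t) by apply sqrt_pos.
    assert (0 < 2 * x - 1 <= k * x - 1) by (unfold x; nra).
    assert (Hmax : s / 16 * (s / 16) = t * t * ((2 * x - 1) * (2 * x - 1))).
    { assert (r * r * r = 33 * r) by (rewrite Hr; reflexivity).
      assert (r * r * r * r = 33 * 33) by (rewrite <- Hr; ring).
      rewrite Ht. unfold x. lra. }
    apply Rsqr_incr_0_var; [| apply Rmult_le_pos; lra].
    unfold Rsqr. rewrite Hmax.
    replace (t * (k * x + -1) * (t * (k * x + -1)))
      with (t * t * ((k * x - 1) * (k * x - 1))) by ring.
    apply Rmult_le_compat_l; nra.
Qed.

Lemma card_roots_minus_pos k q : 0 < q < q_o -> 2 <= k -> has_card (roots k (-1) q) 2.
Proof.
  intros Hq Hk. pose proof PI_RGT_0. set (f := consistency k (-1)).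
  destruct (consistency_unimodal k (-1) ltac:(lra) ltac:(lra)) as [c [Hc [Hinc Hdec]]].
  fold f in Hinc, Hdec.
  assert (Hpeak : q < f c).
  { destruct (q_o_le_consistency k Hk) as [a [Ha Hqa]]. fold f in Hqa.
    destruct (Rtotal_order a c) as [Hac | [-> | Hca]]; [| lra |].
    - specialize (Hinc a c ltac:(lra) Hac ltac:(lra)). lra.
    - specialize (Hdec c a ltac:(lra) Hca ltac:(lra)). lra. }
  destruct (increasing_on_unique_root f 0 c q) as [r1 [Hr1 [Hfr1 Huniq1]]];
    [apply continuity_consistency | lra | exact Hinc
    | unfold f in *; rewrite consistency_0; lra |].
  destruct (decreasing_on_unique_root f c (PI/2) q) as [r2 [Hr2 [Hfr2 Huniq2]]];
    [apply continuity_consistency | lra | exact Hdec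
    | unfold f in *; rewrite consistency_PI2; lra |].
  apply (has_card_2 _ r1 r2); [lra | split; [lra | exact Hfr1] | split; [lra | exact Hfr2] |].
  intros a [Ha Hfa]. destruct (Rle_lt_dec a c).
  - left. apply Huniq1; [lra | exact Hfa].
  - right. apply Huniq2; [lra | exact Hfa].
Qed.

(** * Equilibria as sign patterns *)

Definition Rsum (l : list R) : R := fold_right Rplus 0 l.

Lemma Rsum_app l1 l2 : Rsum (l1 ++ l2) = Rsum l1 + Rsum l2.
Proof. induction l1 as [|x l1 IH]; simpl; [ring |]. rewrite IH. ring. Qed.

Lemma Rsum_map_const {A} c (l : list A) : Rsum (map (fun _ => c) l) = INR (length l) * c.
Proof.
  induction l as [|x l IH]; [simpl; ring |].
  rewrite length_cons, S_INR. simpl. rewrite IH. ring.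
Qed.

Lemma Rsum_map_scal {A} c (F : A -> R) l : Rsum (map (fun x => c * F x) l) = c * Rsum (map F l).
Proof. induction l as [|x l IH]; simpl; [ring |]. rewrite IH. ring. Qed.

Lemma Rsum_map_lin {A} (F G : A -> R) c d l :
  Rsum (map (fun x => c * F x + d * G x) l) = c * Rsum (map F l) + d * Rsum (map G l).
Proof. induction l as [|x l IH]; simpl; [ring |]. rewrite IH. ring. Qed.

Lemma sum_f_R0_nth (F : R -> R) (l : list R) : l <> [] ->
  sum_f_R0 (fun mu => F (nth mu l 0)) (length l - 1) = Rsum (map F l).
Proof.
  induction l as [|x [|y l] IH]; intros Hl; [congruence | simpl; ring |].
  replace (length (x :: y :: l) - 1)%nat with (S (length (y :: l) - 1)) by (simpl; lia).
  rewrite decomp_sum by lia. rewrite Nat.pred_succ.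
  change (F x + sum_f_R0 (fun mu => F (nth mu (y :: l) 0)) (length (y :: l) - 1) =
          Rsum (map F (x :: y :: l))).
  rewrite IH by discriminate. reflexivity.
Qed.

Lemma sumn_weighted n θ (F : R -> R) : length θ = n -> (1 <= n)%nat ->
  sumn n (fun mu => kw n mu * F (th θ mu)) = INR n * Rsum (map F θ).
Proof.
  intros Hlen Hn.
  change (sumn n (fun mu => (fun x => INR n * F x) (nth mu θ 0)) = INR n * Rsum (map F θ)).
  unfold sumn. replace (n - 1)%nat with (length θ - 1)%nat by lia.
  rewrite (sum_f_R0_nth (fun x => INR n * F x)), Rsum_map_scal; [reflexivity |].
  intros ->. simpl in Hlen. lia.
Qed.

Lemma sumn_coupling n θ nu : length θ = n -> (1 <= n)%nat ->
  sumn n (fun mu => kw n nu * kw n mu * sin (th θ nu - th θ mu)) =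
  INR n * INR n * (sin (th θ nu) * Rsum (map cos θ) - cos (th θ nu) * Rsum (map sin θ)).
Proof.
  intros Hlen Hn.
  transitivity (INR n * Rsum (map (fun x => INR n * sin (th θ nu - x)) θ)).
  { rewrite <- sumn_weighted by assumption. apply sum_eq. intros mu _. unfold kw. ring. }
  rewrite (map_ext _ (fun x => INR n * sin (th θ nu) * cos x + - (INR n * cos (th θ nu)) * sin x))
    by (intros x; rewrite sin_minus; ring).
  rewrite Rsum_map_lin. ring.
Qed.

Lemma equilibrium_mean_field n q θ : (1 <= n)%nat ->
  is_equilibrium n q θ <->
  length θ = n /\ (forall nu, (nu < n)%nat -> - PI < th θ nu <= PI) /\
  (forall nu, (nu < n)%nat -> omega n q nu = INR n * (sin (th θ nu) * Rsum (map cos θ))) /\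
  Rsum (map sin θ) = 0 /\ 0 <= Rsum (map cos θ).
Proof.
  intros Hn. assert (Hn0 : 0 < INR n) by (apply lt_0_INR; lia).
  unfold is_equilibrium. split; intros [Hlen [Hrange [Hom [HS HC]]]].
  - rewrite sumn_weighted in HS, HC by assumption.
    assert (HS0 : Rsum (map sin θ) = 0) by nra.
    split; [exact Hlen | split; [exact Hrange | split; [| split; [exact HS0 | nra]]]].
    intros nu Hnu. rewrite Hom, sumn_coupling, HS0 by assumption. field. lra.
  - split; [exact Hlen | split; [exact Hrange | split; [| split]]].
    + intros nu Hnu. rewrite sumn_coupling, HS, Hom by assumption. field. lra.
    + rewrite sumn_weighted, HS by assumption. ring.
    + rewrite sumn_weighted by assumption. nra.
Qed.

Lemma omega_odd m q nu : omega (2*m+1) q nu =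
  if (nu <? m)%nat then INR (2*m+1) * q
  else if (nu <? 2*m)%nat then - (INR (2*m+1) * q) else 0.
Proof.
  unfold omega. replace (2*m+1-1)%nat with (m*2)%nat by lia.
  rewrite Nat.div_mul by lia. replace (m*2)%nat with (2*m)%nat by lia. reflexivity.
Qed.

Definition sg (t : bool) : R := if t then 1 else -1.

Definition signed_count (B : list bool) : R := Rsum (map sg B).

Lemma signed_count_count_true B : signed_count B = 2 * INR (count_true B) - INR (length B).
Proof.
  unfold signed_count, count_true.
  induction B as [|[] B IH]; simpl map; simpl filter; rewrite ?length_cons, ?S_INR;
    simpl Rsum; rewrite ?IH; simpl INR; ring.
Qed.

Definition branch (a : R) (t : bool) : R := if t then a else PI - a.

(* Oscillators [0, m) (frequency n q) sit at [a] or [PI - a], oscillators [m, 2m)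
   (frequency -n q) at [-a] or [a - PI], the last one at [0] or [PI]; the booleans
   [B] and [e] record which oscillators have [cos >= 0]. *)
Definition config (m : nat) (B : list bool) (e : bool) (a : R) : list R :=
  map (branch a) (firstn m B) ++ map (fun t => - branch a t) (skipn m B) ++ [branch 0 e].

Lemma sin_branch a t : sin (branch a t) = sin a.
Proof. destruct t; simpl; [reflexivity | apply sin_PI_x]. Qed.

Lemma cos_branch a t : cos (branch a t) = sg t * cos a.
Proof. destruct t; simpl; [ring | rewrite Rtrigo_facts.cos_pi_minus; ring]. Qed.

Lemma length_config m B e a : length B = (2*m)%nat -> length (config m B e a) = (2*m+1)%nat.
Proof.
  intros HB. unfold config. rewrite !length_app, !length_map, length_firstn, length_skipn.
  simpl. lia.
Qed.

Lemma nth_map_lt {A B} (f : A -> B) l d d' n :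
  (n < length l)%nat -> nth n (map f l) d' = f (nth n l d).
Proof.
  intros Hn. rewrite nth_indep with (d' := f d) by (rewrite length_map; exact Hn).
  apply map_nth.
Qed.

Lemma nth_config m B e a nu : length B = (2*m)%nat -> (nu < 2*m+1)%nat ->
  nth nu (config m B e a) 0 =
  if (nu <? m)%nat then branch a (nth nu B false)
  else if (nu <? 2*m)%nat then - branch a (nth nu B false) else branch 0 e.
Proof.
  intros HB Hnu. unfold config.
  assert (Hfirst : length (map (branch a) (firstn m B)) = m)
    by (rewrite length_map, length_firstn; lia).
  assert (Hskip : length (map (fun t => - branch a t) (skipn m B)) = m)
    by (rewrite length_map, length_skipn; lia).
  destruct (Nat.ltb_spec nu m); [| destruct (Nat.ltb_spec nu (2*m))].
  - rewrite app_nth1, nth_map_lt with (d := false), nth_firstn by (rewrite ?length_firstn; lia).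
    destruct (Nat.ltb_spec nu m); [reflexivity | lia].
  - rewrite app_nth2, app_nth1, Hfirst by lia.
    rewrite nth_map_lt with (d := false), nth_skipn by (rewrite ?length_skipn; lia).
    do 3 f_equal. lia.
  - rewrite app_nth2, app_nth2, Hfirst, Hskip by lia.
    replace (nu - m - m)%nat with O by lia. reflexivity.
Qed.

Lemma Rsum_sin_config m B e a : length B = (2*m)%nat -> Rsum (map sin (config m B e a)) = 0.
Proof.
  intros HB. unfold config. rewrite !map_app, !map_map, !Rsum_app.
  rewrite (map_ext (fun t => sin (branch a t)) (fun _ => sin a)) by apply sin_branch.
  rewrite (map_ext (fun t => sin (- branch a t)) (fun _ => - sin a))
    by (intros t; rewrite sin_neg, sin_branch; reflexivity).
  rewrite !Rsum_map_const, length_firstn, length_skipn. simpl.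
  rewrite sin_branch, sin_0. replace (Nat.min m (length B)) with (length B - m)%nat by lia. ring.
Qed.

Lemma Rsum_cos_config m B e a :
  Rsum (map cos (config m B e a)) = signed_count B * cos a + sg e.
Proof.
  unfold config, signed_count. rewrite !map_app, !map_map, !Rsum_app.
  rewrite (map_ext (fun t => cos (branch a t)) (fun t => cos a * sg t)),
    (map_ext (fun t => cos (- branch a t)) (fun t => cos a * sg t))
    by (intros t; rewrite ?cos_neg, cos_branch; ring).
  rewrite !Rsum_map_scal, <- Rplus_assoc, <- Rmult_plus_distr_l, <- Rsum_app, <- map_app,
    firstn_skipn.
  simpl. rewrite cos_branch, cos_0. ring.
Qed.

Lemma config_bounds m B e a x : 0 < a < PI/2 -> In x (config m B e a) -> - PI < x <= PI.
Proof.
  intros Ha Hx. pose proof PI_RGT_0. unfold config in Hx.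
  rewrite !in_app_iff, !in_map_iff in Hx.
  destruct Hx as [[t [<- _]] | [[t [<- _]] | [<- | []]]];
    [destruct t | destruct t | destruct e]; simpl; lra.
Qed.

Definition cos_nonneg (x : R) : bool := if Rle_dec 0 (cos x) then true else false.

Lemma cos_nonneg_branch a t : 0 <= a < PI/2 -> cos_nonneg (branch a t) = t.
Proof.
  intros Ha. assert (0 < cos a) by (apply cos_gt_0; lra).
  unfold cos_nonneg. rewrite cos_branch.
  destruct t; simpl; destruct (Rle_dec 0 _); auto; lra.
Qed.

Lemma cos_nonneg_opp x : cos_nonneg (- x) = cos_nonneg x.
Proof. unfold cos_nonneg. rewrite cos_neg. reflexivity. Qed.

Lemma map_cos_nonneg_config m B e a : 0 < a < PI/2 ->
  map cos_nonneg (config m B e a) = B ++ [e].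
Proof.
  intros Ha. pose proof PI_RGT_0. unfold config. rewrite !map_app, !map_map. simpl.
  rewrite (map_ext (fun t => cos_nonneg (branch a t)) (fun t => t)),
    (map_ext (fun t => cos_nonneg (- branch a t)) (fun t => t))
    by (intros t; rewrite ?cos_nonneg_opp; apply cos_nonneg_branch; lra).
  rewrite cos_nonneg_branch by lra. rewrite !map_id, app_assoc, firstn_skipn. reflexivity.
Qed.

Lemma config_inj m B B' e e' a a' : (1 <= m)%nat -> length B = (2*m)%nat ->
  0 < a < PI/2 -> 0 < a' < PI/2 -> config m B e a = config m B' e' a' ->
  B = B' /\ e = e' /\ a = a'.
Proof.
  intros Hm HB Ha Ha' Heq.
  assert (Hsigns := f_equal (map cos_nonneg) Heq).
  rewrite !map_cos_nonneg_config in Hsigns by assumption.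
  apply app_inj_tail in Hsigns as [<- <-]. split; [reflexivity | split; [reflexivity |]].
  apply (f_equal (fun l => nth 0 l 0)) in Heq. rewrite !nth_config in Heq by lia.
  destruct (Nat.ltb_spec 0 m); [| lia]. destruct (nth 0 B false); simpl in Heq; lra.
Qed.

Lemma branch_of_sin x a : - PI < x <= PI -> 0 <= a <= PI/2 -> sin x = sin a ->
  x = branch a (cos_nonneg x).
Proof.
  intros Hx Ha Hsin. pose proof PI_RGT_0.
  assert (0 <= sin a) by (apply sin_ge_0; lra).
  assert (Hx0 : 0 <= x).
  { apply Rnot_lt_le. intros Hlt. assert (sin x < 0) by (apply sin_lt_0_var; lra). lra. }
  unfold cos_nonneg. destruct (Rle_dec 0 (cos x)) as [Hc | Hc]; simpl.
  - assert (Hx2 : x <= PI/2).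
    { apply Rnot_lt_le. intros Hlt. assert (cos x < 0) by (apply cos_lt_0; lra). lra. }
    rewrite <- (asin_sin x), <- (asin_sin a), Hsin by lra. reflexivity.
  - assert (Hx2 : PI/2 < x).
    { apply Rnot_le_lt. intros Hle. apply Hc, cos_ge_0; lra. }
    rewrite <- sin_PI_x in Hsin.
    enough (PI - x = a) by lra.
    rewrite <- (asin_sin (PI - x)), <- (asin_sin a), Hsin by lra. reflexivity.
Qed.

Lemma config_is_equilibrium m q B e a : length B = (2*m)%nat -> 0 < q ->
  0 < a < PI/2 -> consistency (signed_count B) (sg e) a = q ->
  is_equilibrium (2*m+1) q (config m B e a).
Proof.
  intros HB Hq Ha Hroot. pose proof PI_RGT_0.
  assert (Hn : 0 < INR (2*m+1)) by (apply lt_0_INR; lia).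
  assert (HC : sin a * Rsum (map cos (config m B e a)) = q)
    by (rewrite Rsum_cos_config; exact Hroot).
  assert (0 < sin a) by (apply sin_gt_0; lra).
  apply equilibrium_mean_field; [lia |].
  split; [apply length_config, HB |]. split; [| split; [| split]].
  - intros nu Hnu. apply (config_bounds m B e a); [exact Ha |]. apply nth_In.
    rewrite length_config; assumption.
  - intros nu Hnu. unfold th. rewrite omega_odd, nth_config by assumption.
    destruct (nu <? m)%nat; [| destruct (nu <? 2*m)%nat].
    + rewrite sin_branch, HC. reflexivity.
    + rewrite sin_neg, sin_branch. rewrite <- HC. ring.
    + rewrite sin_branch, sin_0. ring.
  - apply Rsum_sin_config, HB.
  - nra.
Qed.

Lemma config_of_sines m θ s : length θ = (2*m+1)%nat ->
  (forall nu, (nu < 2*m+1)%nat -> - PI < th θ nu <= PI) -> 0 < s <= 1 ->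
  (forall nu, (nu < 2*m+1)%nat -> sin (th θ nu) =
     if (nu <? m)%nat then s else if (nu <? 2*m)%nat then - s else 0) ->
  θ = config m (map cos_nonneg (firstn (2*m) θ)) (cos_nonneg (th θ (2*m))) (asin s).
Proof.
  intros Hlen Hrange Hs Hsin. pose proof PI_RGT_0.
  pose proof (asin_bound s). pose proof (asin_pos s Hs).
  assert (Hsa : sin (asin s) = s) by (apply sin_asin; lra).
  assert (HB : length (map cos_nonneg (firstn (2*m) θ)) = (2*m)%nat)
    by (rewrite length_map, length_firstn; lia).
  apply nth_ext with 0 0; [rewrite length_config; assumption |].
  intros nu Hnu. rewrite Hlen in Hnu. rewrite nth_config by assumption.
  specialize (Hsin nu Hnu). specialize (Hrange nu Hnu). unfold th in *.
  destruct (Nat.ltb_spec nu m); [| destruct (Nat.ltb_spec nu (2*m))].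
  - rewrite nth_map_lt with (d := 0), nth_firstn by (rewrite ?length_firstn; lia).
    destruct (Nat.ltb_spec nu (2*m)); [| lia].
    apply branch_of_sin; lra.
  - rewrite nth_map_lt with (d := 0), nth_firstn by (rewrite ?length_firstn; lia).
    destruct (Nat.ltb_spec nu (2*m)); [| lia].
    assert (nth nu θ 0 <> PI) by (intros Hpi; rewrite Hpi, sin_PI in Hsin; lra).
    rewrite <- cos_nonneg_opp, <- branch_of_sin; [ring | lra | lra |].
    rewrite sin_neg, Hsin, Hsa. ring.
  - assert (nu = 2*m)%nat as -> by lia. apply branch_of_sin; [lra | lra |].
    rewrite Hsin, sin_0. reflexivity.
Qed.

Lemma equilibrium_is_config m q θ : (1 <= m)%nat -> 0 < q < 1 ->
  is_equilibrium (2*m+1) q θ ->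
  exists B e a, length B = (2*m)%nat /\ 0 < a < PI/2 /\
    consistency (signed_count B) (sg e) a = q /\ θ = config m B e a.
Proof.
  intros Hm Hq Heq. pose proof PI_RGT_0.
  apply equilibrium_mean_field in Heq as [Hlen [Hrange [Hom [_ HC]]]]; [| lia].
  set (C := Rsum (map cos θ)) in *.
  assert (Hn : 0 < INR (2*m+1)) by (apply lt_0_INR; lia).
  assert (Hsin : forall nu, (nu < 2*m+1)%nat -> sin (th θ nu) * C =
     if (nu <? m)%nat then q else if (nu <? 2*m)%nat then - q else 0).
  { intros nu Hnu. apply (Rmult_eq_reg_l (INR (2*m+1))); [| lra].
    rewrite <- Hom, omega_odd by exact Hnu.
    destruct (nu <? m)%nat; [| destruct (nu <? 2*m)%nat]; ring. }
  assert (Hsin0 := Hsin O ltac:(lia)). destruct (Nat.ltb_spec 0 m) as [_ | ]; [| lia].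
  assert (HC0 : 0 < C) by (destruct HC as [| HC0]; [assumption | rewrite <- HC0 in Hsin0; lra]).
  set (s := q / C).
  assert (Hs : 0 < s <= 1).
  { unfold s. split; [apply Rdiv_lt_0_compat; lra |].
    replace (q / C) with (sin (th θ 0)) by (rewrite <- Hsin0; field; lra). apply SIN_bound. }
  assert (Hsines : forall nu, (nu < 2*m+1)%nat -> sin (th θ nu) =
     if (nu <? m)%nat then s else if (nu <? 2*m)%nat then - s else 0).
  { intros nu Hnu. apply (Rmult_eq_reg_r C); [| lra]. rewrite Hsin by exact Hnu.
    unfold s. destruct (nu <? m)%nat; [| destruct (nu <? 2*m)%nat]; field; lra. }
  pose proof (config_of_sines m θ s Hlen Hrange Hs Hsines) as Hshape.
  set (B := map cos_nonneg (firstn (2*m) θ)) in *.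
  set (e := cos_nonneg (th θ (2*m))) in *.
  set (a := asin s) in *.
  assert (Hsa : sin a = s) by (apply sin_asin; lra).
  assert (Hroot : consistency (signed_count B) (sg e) a = q).
  { unfold consistency. rewrite <- (Rsum_cos_config m), <- Hshape, Hsa.
    fold C. unfold s. field. lra. }
  exists B, e, a. split; [unfold B; rewrite length_map, length_firstn; lia |].
  split; [split | split; [exact Hroot | exact Hshape]].
  - apply asin_pos. exact Hs.
  - destruct (asin_bound s) as [_ [Hlt | Heq]]; [exact Hlt |].
    fold a in Heq. rewrite Heq, consistency_PI2 in Hroot. destruct e; simpl in Hroot; lra.
Qed.

Lemma card_roots_signed_count m B e q : length B = (2*m)%nat -> 0 < q < q_o ->
  has_card (roots (signed_count B) (sg e) q)
    (if e then 1 else if (m <? count_true B)%nat then 2 else 0).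
Proof.
  intros HB Hq. pose proof q_o_lt_1.
  rewrite signed_count_count_true, HB, mult_INR. replace (INR 2) with 2 by (simpl; ring).
  destruct e; simpl sg.
  - destruct (Nat.lt_total (count_true B) m) as [Hlt | [Heq | Hgt]].
    + apply le_INR in Hlt. rewrite S_INR in Hlt. apply card_roots_plus_neg; lra.
    + rewrite Heq. replace (2 * INR m - 2 * INR m) with 0 by ring. apply card_roots_plus_0. lra.
    + apply le_INR in Hgt. rewrite S_INR in Hgt. apply card_roots_plus_pos; lra.
  - destruct (Nat.ltb_spec m (count_true B)) as [Hgt | Hle].
    + apply le_INR in Hgt. rewrite S_INR in Hgt. apply card_roots_minus_pos; lra.
    + apply le_INR in Hle. apply card_roots_minus_nonpos; lra.
Qed.

Lemma card_equilibria_of_pattern m q B : (1 <= m)%nat -> length B = (2*m)%nat -> 0 < q < q_o ->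
  has_card (fun θ => exists e a, roots (signed_count B) (sg e) q a /\ θ = config m B e a)
    (1 + if (m <? count_true B)%nat then 2 else 0).
Proof.
  intros Hm HB Hq.
  apply (has_card_ext (fun θ =>
           (exists a, roots (signed_count B) (sg true) q a /\ θ = config m B true a) \/
           (exists a, roots (signed_count B) (sg false) q a /\ θ = config m B false a))).
  { intros θ. split; [intros [[a H] | [a H]]; eauto | intros [[] [a H]]; eauto]. }
  apply has_card_union.
  - intros θ [a [[Ha _] ->]] [a' [[Ha' _] Heq]].
    apply config_inj in Heq as [_ [Heq _]]; auto. discriminate.
  - apply has_card_image; [| apply (card_roots_signed_count m B true q HB Hq)].
    intros a a' [Ha _] [Ha' _] Heq. apply config_inj in Heq as [_ [_ Heq]]; auto.
  - apply has_card_image; [| apply (card_roots_signed_count m B false q HB Hq)].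
    intros a a' [Ha _] [Ha' _] Heq. apply config_inj in Heq as [_ [_ Heq]]; auto.
Qed.

Lemma card_equilibria m q : (1 <= m)%nat -> 0 < q < q_o ->
  has_card (is_equilibrium (2*m+1) q)
    (list_sum (map (fun B => 1 + if m <? count_true B then 2 else 0)%nat (bool_lists (2*m)))).
Proof.
  intros Hm Hq. pose proof q_o_lt_1.
  apply (has_card_ext (fun θ => exists B, In B (bool_lists (2*m)) /\
           exists e a, roots (signed_count B) (sg e) q a /\ θ = config m B e a)).
  { intros θ. split.
    - intros [B [HB [e [a [[Ha Hroot] ->]]]]]. apply In_bool_lists in HB.
      apply config_is_equilibrium; auto; lra.
    - intros Heq.
      destruct (equilibrium_is_config m q θ Hm ltac:(lra) Heq) as [B [e [a [HB [Ha [Hroot ->]]]]]].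
      exists B. split; [apply In_bool_lists, HB |]. exists e, a. split; [split |]; auto. }
  apply (has_card_bigunion (bool_lists (2*m))
           (fun B θ => exists e a, roots (signed_count B) (sg e) q a /\ θ = config m B e a)).
  - apply NoDup_bool_lists.
  - intros B HB. apply In_bool_lists in HB. apply card_equilibria_of_pattern; auto.
  - intros B B' θ HB _ [e [a [[Ha _] ->]]] [e' [a' [[Ha' _] Heq]]].
    apply In_bool_lists in HB. apply config_inj in Heq as [HBB' _]; auto.
Qed.

Theorem theorem5 (n : nat) (q : R) :
  (3 <= n)%nat -> Nat.Odd n -> 0 < q -> q < q_o ->
  exists l : list (list R),
    NoDup l /\
    (forall theta, In theta l <-> is_equilibrium n q theta) /\
    INR (length l) = 2 ^ n - Binomial.C (n - 1) ((n - 1) / 2).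
Proof.
  intros Hn [m ->] Hq Hqo.
  destruct (card_equilibria m q ltac:(lia) (conj Hq Hqo)) as [l [Hl [Hin Hlen]]].
  exists l. split; [exact Hl | split; [exact Hin |]].
  replace (2*m+1-1)%nat with (2*m)%nat by lia.
  replace ((2*m)/2)%nat with m by (rewrite Nat.mul_comm, Nat.div_mul; lia).
  rewrite Hlen. apply sum_majority_weights.
Qed.
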